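(* Let $u$ be a quasi-definite linear functional on $\mathbb C[\boldsymbol x]$, let $(\boldsymbol x_i,\boldsymbol\beta_i)\in\mathbb R^D\times\mathbb Z_+^D$, $i=1,\dots,q$, with the $\boldsymbol x_i$ distinct, let $\xi_{i,\boldsymbol\alpha}\in\mathbb C$ for $\boldsymbol\alpha\preceq\boldsymbol\beta_i$, and let $$\hat u=u+\sum_{i=1}^q\sum_{\boldsymbol\alpha\preceq\boldsymbol\beta_i}\frac{(-1)^{|\boldsymbol\alpha|}}{\boldsymbol\alpha!}\xi_{i,\boldsymbol\alpha}\delta^{(\boldsymbol\alpha)}(\boldsymbol x-\boldsymbol x_i),$$ assumed quasi-definite. Then for every $n\ge1$ the matrix $I_{N_S}+\Xi\mathcal K_{n-1}(S)$ is invertible and $$\hat P_{[n]}(\boldsymbol x)=\Theta_*\begin{pmatrix}I_{N_S}+\Xi\mathcal K_{n-1}(S)&\Xi\big(\mathcal J_{K_{n-1}(\cdot,\boldsymbol x)}(S)\big)^\top\\ \mathcal J_{P_{[n]}}(S)&P_{[n]}(\boldsymbol x)\end{pmatrix},\qquad \hat H_{[n]}=\Theta_*\begin{pmatrix}I_{N_S}+\Xi\mathcal K_{n-1}(S)&-\Xi\big(\mathcal J_{P_{[n]}}(S)\big)^\top\\ \mathcal J_{P_{[n]}}(S)&H_{[n]}\end{pmatrix}.$$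
   Context: Multi-indices are totally ordered by $\preceq$: graded lexicographic order (by length, then lexicographically). $\chi(\boldsymbol x)$ is the semi-infinite vector of monomials in this order, blocks $\chi_{[k]}$. For a linear functional $u$ on $\mathbb C[\boldsymbol x]$ (applied entrywise), moment matrix $G=\langle u,\chi\chi^\top\rangle$; quasi-definite means all block truncations nonsingular; then $G=S^{-1}HS^{-\top}$ with $S$ block lower unitriangular and $H$ block diagonal with blocks $H_{[k]}$; $P=S\chi$ with blocks $P_{[k]}$ are the monic orthogonal polynomials; $P^{[n]}=(P_{[0]}^\top,\dots,P_{[n-1]}^\top)^\top$, $H^{[n]}=\operatorname{diag}(H_{[0]},\dots,H_{[n-1]})$; hats refer to $\hat u$. Christoffel–Darboux kernel $K_{n-1}(\boldsymbol x,\boldsymbol y)=\sum_{m=0}^{n-1}P_{[m]}(\boldsymbol x)^\top H_{[m]}^{-1}P_{[m]}(\boldsymbol y)$. $\langle\delta^{(\boldsymbol\alpha)}(\boldsymbol x-\boldsymbol x_i),P\rangle=(-1)^{|\boldsymbol\alpha|}\partial^{\boldsymbol\alpha}P(\boldsymbol x_i)$. $S=\{(\boldsymbol x_i,\boldsymbol\beta_i)\}$. Jet: for a polynomial (or column vector of polynomials) $F$, $\mathcal J_F^{\boldsymbol\beta}(\boldsymbol y)$ is the row (matrix) $\big[\frac{1}{\boldsymbol\alpha!}\partial^{\boldsymbol\alpha}F(\boldsymbol y)\big]_{\boldsymbol\alpha\preceq\boldsymbol\beta}$ with columns in the order $\preceq$; $\mathcal J_F(S)=\big[\mathcal J_F^{\boldsymbol\beta_1}(\boldsymbol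 x_1),\dots,\mathcal J_F^{\boldsymbol\beta_q}(\boldsymbol x_q)\big]$, having $N_S=\sum_i\#\{\boldsymbol\alpha\preceq\boldsymbol\beta_i\}$ columns; $\mathcal J_{K_{n-1}(\cdot,\boldsymbol x)}(S)$ is the jet of $\boldsymbol y\mapsto K_{n-1}(\boldsymbol y,\boldsymbol x)$. $\xi^{(i)}$ is the square matrix indexed by $\boldsymbol\alpha,\boldsymbol\beta\preceq\boldsymbol\beta_i$ with entries $\xi_{i,\boldsymbol\alpha+\boldsymbol\beta}$ (taken as $0$ when $\boldsymbol\alpha+\boldsymbol\beta\not\preceq\boldsymbol\beta_i$); $\Xi=\operatorname{diag}(\xi^{(1)},\dots,\xi^{(q)})$. $\mathcal K_{n-1}(S)=\big(\mathcal J_{P^{[n]}}(S)\big)^\top(H^{[n]})^{-1}\mathcal J_{P^{[n]}}(S)$. Last quasi-determinant: $\Theta_*\begin{pmatrix}A&B\\C&D\end{pmatrix}=D-CA^{-1}B$. *)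

From HB Require Import structures.
From mathcomp Require Import all_boot all_order all_algebra.
From mathcomp Require Import mpoly.
From mathcomp Require Export complex.

Set Implicit Arguments.
Unset Strict Implicit.
Unset Printing Implicit Defensive.

Import Order.TTheory GRing.Theory Num.Theory.
Local Open Scope ring_scope.

Definition mfact (D : nat) (a : 'X_{1..D}) : nat := (\prod_(i < D) (a i)`!)%N.

(* lexicographic comparison: a comes strictly before b inside a block   *)
(* iff at the first index where they differ, a has the larger entry     *)
(* (so chi_[1] = (x_1, ..., x_D), chi_[2] = (x_1^2, x_1 x_2, ...)).      *)
Definition lexbefore (D : nat) (a b : 'X_{1..D}) : bool :=
  [exists i : 'I_D, [forall j : 'I_D, (j < i)%N ==> (a j == b j)] && (b i < a i)%N].

Definition mpreceq (D : nat) (a b : 'X_{1..D}) : bool :=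
  (mdeg a < mdeg b)%N || ((mdeg a == mdeg b) && ((a == b) || lexbefore a b)).

Definition mons (D k : nat) : seq 'X_{1..D} :=
  sort (@mpreceq D)
    [seq a <- [seq [multinom (f i : nat) | i < D] | f : {ffun 'I_D -> 'I_k.+1}]
       | mdeg a == k].

Fixpoint chi (D n : nat) : seq 'X_{1..D} :=
  if n is n'.+1 then chi D n' ++ mons D n' else [::].

Definition Nb (D n : nat) : nat := size (chi D n).
Definition rb (D n : nat) : nat := size (mons D n).

(* The truncation at level n (multi-indices of length <= n) is indexed  *)
(* by 'I_(Nb D n + rb D n): first the block chi^{[n]}, then chi_[n].    *)
Definition tmon (D n : nat) (i : 'I_(Nb D n + rb D n)) : 'X_{1..D} :=
  nth 0%MM (chi D n ++ mons D n) i.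
Definition tdeg (D n : nat) (i : 'I_(Nb D n + rb D n)) : nat := mdeg (tmon i).

Section Functionals.
Variables (F : fieldType) (D : nat).

Definition lin_functional (u : {mpoly F[D]} -> F) : Prop :=
  forall (a : F) (p r : {mpoly F[D]}), u (a *: p + r) = a * u p + u r.

(* truncated moment matrix G^{[n+1]} = <u, chi^{[n+1]} (chi^{[n+1]})^T> *)
Definition Gtr (u : {mpoly F[D]} -> F) (n : nat) : 'M[F]_(Nb D n + rb D n) :=
  \matrix_(i, j) u 'X_[tmon i + tmon j].

Definition quasi_definite (u : {mpoly F[D]} -> F) : Prop :=
  forall n : nat, Gtr u n \in unitmx.

Definition block_lower_unitri (n : nat) (S : 'M[F]_(Nb D n + rb D n)) : Prop :=
  forall i j, ((tdeg i < tdeg j)%N -> S i j = 0) /\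
              (tdeg i = tdeg j -> S i j = (i == j)%:R).
Definition block_diagonal (n : nat) (H : 'M[F]_(Nb D n + rb D n)) : Prop :=
  forall i j, tdeg i != tdeg j -> H i j = 0.

Definition LU_factorization (u : {mpoly F[D]} -> F) (n : nat)
    (S H : 'M[F]_(Nb D n + rb D n)) : Prop :=
  [/\ block_lower_unitri S, block_diagonal H &
      Gtr u n = invmx S *m H *m (invmx S)^T].

(* P = S chi (truncated): the monic orthogonal polynomials of length <= n *)
Definition Pvec (n : nat) (S : 'M[F]_(Nb D n + rb D n)) :
    'cV[{mpoly F[D]}]_(Nb D n + rb D n) :=
  \col_i \sum_j (S i j)%:MP * 'X_[tmon j].

Definition Pupto (n : nat) S : 'cV[{mpoly F[D]}]_(Nb D n) := usubmx (Pvec S).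
Definition Pblk (n : nat) S : 'cV[{mpoly F[D]}]_(rb D n) := dsubmx (Pvec S).
Definition Hupto (n : nat) (H : 'M[F]_(Nb D n + rb D n)) : 'M[F]_(Nb D n) :=
  ulsubmx H.
Definition Hblk (n : nat) (H : 'M[F]_(Nb D n + rb D n)) : 'M[F]_(rb D n) :=
  drsubmx H.

End Functionals.

(* Jets. For A a commutative ring with units (F, or F[x] for kernels).  *)

Definition jet (A : comUnitRingType) (D : nat) (P : {mpoly A[D]})
    (pt : 'I_D -> A) (a : 'X_{1..D}) : A :=
  ((mfact a)%:R)^-1 * (mderivm a P).@[pt].

Definition jetidx (D : nat) (b : 'X_{1..D}) : seq 'X_{1..D} :=
  [seq a <- chi D (mdeg b).+1 | mpreceq a b].

Definition jw (D : nat) (b : 'X_{1..D}) : nat := size (jetidx b).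

Definition jetnode (A : comUnitRingType) (D m : nat)
    (P : 'cV[{mpoly A[D]}]_m) (pt : 'I_D -> A) (b : 'X_{1..D}) :
    'M[A]_(m, jw b) :=
  \matrix_(r, k) jet (P r 0) pt (nth 0%MM (jetidx b) k).

Definition jetS (A : comUnitRingType) (D m q : nat)
    (P : 'cV[{mpoly A[D]}]_m) (pts : 'I_q -> 'I_D -> A)
    (beta : 'I_q -> 'X_{1..D}) : 'M[A]_(m, \sum_(i < q) jw (beta i)) :=
  \mxrow_(i < q) jetnode P (pts i) (beta i).

Section Perturbation.
Variables (F : fieldType) (D q : nat).
Variables (pts : 'I_q -> 'I_D -> F) (beta : 'I_q -> 'X_{1..D})
          (xi : 'I_q -> 'X_{1..D} -> F).

(* <delta^{(alpha)}(x - pt), p> = (-1)^{|alpha|} d^alpha p (pt) *)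
Definition delta_der (pt : 'I_D -> F) (a : 'X_{1..D}) (p : {mpoly F[D]}) : F :=
  (-1) ^+ mdeg a * (mderivm a p).@[pt].

Definition uhat (u : {mpoly F[D]} -> F) (p : {mpoly F[D]}) : F :=
  u p + \sum_(i < q) \sum_(a <- jetidx (beta i))
          ((-1) ^+ mdeg a / (mfact a)%:R) * xi i a * delta_der (pts i) a p.

Definition ximat (i : 'I_q) : 'M[F]_(jw (beta i)) :=
  \matrix_(k, l)
    let s := (nth 0%MM (jetidx (beta i)) k + nth 0%MM (jetidx (beta i)) l)%MM in
    if mpreceq s (beta i) then xi i s else 0.

Definition NS : nat := \sum_(i < q) jw (beta i).

Definition Xi : 'M[F]_NS := \mxdiag_(i < q) ximat i.

Variables (n : nat) (S H : 'M[F]_(Nb D n + rb D n)).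

Definition calK : 'M[F]_NS :=
  (jetS (Pupto S) pts beta)^T *m invmx (Hupto H) *m jetS (Pupto S) pts beta.

(* K_{n-1}(y, x) = sum_{m<n} P_[m](y)^T H_[m]^{-1} P_[m](x)
   = P^{[n]}(y)^T (H^{[n]})^{-1} P^{[n]}(x), as a polynomial in y with
   coefficients in F[x] *)
Definition CDkernel : {mpoly {mpoly F[D]}[D]} :=
  \sum_(a < Nb D n) \sum_(b < Nb D n)
     map_mpoly (fun c : F => c%:MP) (Pupto S a 0)
     * ((invmx (Hupto H) a b)%:MP * Pupto S b 0)%:MP.

Definition jetK : 'M[{mpoly F[D]}]_(1, NS) :=
  jetS (const_mx CDkernel : 'cV_1) (fun i k => (pts i k)%:MP) beta.

End Perturbation.

Definition qdet (A : comUnitRingType) (k l m : nat) (MA : 'M[A]_k)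
    (MB : 'M[A]_(k, l)) (MC : 'M[A]_(m, k)) (MD : 'M[A]_(m, l)) : 'M[A]_(m, l) :=
  MD - MC *m invmx MA *m MB.

Definition mxC (F : fieldType) (D k l : nat) (M : 'M[F]_(k, l)) :
    'M[{mpoly F[D]}]_(k, l) := map_mx (fun c : F => c%:MP) M.

(** Pairing the perturbation in [uhat] with a product of monomials and applying
    the Leibniz rule for jets shows that the moment matrix of [uhat] is
    [G + J Xi J^T], where [J] collects the jets of the monomials at the nodes.
    In the basis of the orthogonal polynomials of [u] this reads
    [S Ghat S^T = H + J_P Xi J_P^T] with [J_P = S J]. Writing [Shat = L S], with [L]
    block lower unitriangular for the splitting (length < n | length n), the
    congruence [Hhat = L (H + J_P Xi J_P^T) L^T] read blockwise gives the last row of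
    [L] and the last block of [Hhat] in terms of the inverse of the top-left block
    [H^[n] + J Xi J^T]. The push-through identity
    [(I + Xi K) Xi J^T = Xi J^T (H^[n])^-1 (H^[n] + J Xi J^T)], with
    [K = J^T (H^[n])^-1 J], converts that inverse into [(I + Xi K)^-1], and both
    quasi-determinant formulas follow; the jet of the Christoffel-Darboux kernel
    supplies the factor [J^T (H^[n])^-1 P^[n]]. *)

From HB Require Import structures.
From mathcomp Require Import all_boot all_order all_algebra.
From mathcomp Require Import mpoly complex.
From mathcomp Require Import zify ring.
Import GRing.Theory Num.Theory.
Local Open Scope ring_scope.

Set Implicit Arguments.
Unset Strict Implicit.
Unset Printing Implicit Defensive.

Section Multiindices.
Variable D : nat.
Implicit Types a b c : 'X_{1..D}.

Lemma mnm_le_mdeg a i : (a i <= mdeg a)%N.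
Proof. by rewrite mdegE (bigD1 i) //= leq_addr. Qed.

Lemma mem_mons k a : (a \in mons D k) = (mdeg a == k).
Proof.
rewrite /mons mem_sort mem_filter andbC.
have [<-|_] := eqVneq (mdeg a) k; last by rewrite andbF.
rewrite andbT; apply/mapP.
exists [ffun i => inord (a i) : 'I_(mdeg a).+1]; first by rewrite mem_enum.
by apply/mnmP=> i; rewrite mnmE ffunE inordK // ltnS mnm_le_mdeg.
Qed.

Lemma uniq_mons k : uniq (mons D k).
Proof.
rewrite /mons sort_uniq filter_uniq // map_inj_uniq ?enum_uniq // => f g /mnmP E.
by apply/ffunP=> i; apply/val_inj; have := E i; rewrite !mnmE.
Qed.

Lemma mem_chi m a : (a \in chi D m) = (mdeg a < m)%N.
Proof.
by elim: m => //= m IH; rewrite mem_cat IH mem_mons ltnS (leq_eqVlt (mdeg a)) orbC.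
Qed.

Lemma uniq_chi m : uniq (chi D m).
Proof.
elim: m => //= m IH; rewrite cat_uniq IH uniq_mons andbT /=.
by apply/hasPn=> a; rewrite mem_mons mem_chi => /eqP ->; rewrite ltnn.
Qed.

Lemma tdeg_lt n (i : 'I_(Nb D n + rb D n)) : (i < Nb D n)%N -> (tdeg i < n)%N.
Proof. by move=> lt; rewrite /tdeg /tmon nth_cat lt -mem_chi mem_nth. Qed.

Lemma tdeg_eq n (i : 'I_(Nb D n + rb D n)) : (Nb D n <= i)%N -> tdeg i = n.
Proof.
move=> le; rewrite /tdeg /tmon nth_cat ltnNge le /=; apply/eqP; rewrite -mem_mons.
by apply: mem_nth; rewrite -(ltn_add2l (Nb D n)) subnKC.
Qed.

Lemma mpreceq_mdeg a b : mpreceq a b -> (mdeg a <= mdeg b)%N.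
Proof. by case/orP => [/ltnW //|/andP [/eqP -> _]]. Qed.

Lemma mem_jetidx a b : (a \in jetidx b) = mpreceq a b.
Proof.
by rewrite /jetidx mem_filter mem_chi ltnS; apply/andb_idr/mpreceq_mdeg.
Qed.

Lemma uniq_jetidx b : uniq (jetidx b).
Proof. exact/filter_uniq/uniq_chi. Qed.

Lemma lem_mpreceq a b c : (a <= b)%MM -> mpreceq b c -> mpreceq a c.
Proof.
move=> ab bc; have [-> //|ne] := eqVneq a b.
apply/orP; left; apply: leq_trans (mpreceq_mdeg bc).
rewrite -(submK ab) mdegD -{1}[mdeg a]add0n ltn_add2r lt0n mdeg_eq0.
by apply: contra ne => /eqP E; rewrite -(submK ab) E add0m.
Qed.

End Multiindices.

Section JetLinear.
Variables (A : comUnitRingType) (D : nat).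

Lemma jetD (p r : {mpoly A[D]}) pt a : jet (p + r) pt a = jet p pt a + jet r pt a.
Proof. by rewrite /jet mderivmD mevalD mulrDr. Qed.

Lemma jetZ c (p : {mpoly A[D]}) pt a : jet (c *: p) pt a = c * jet p pt a.
Proof. by rewrite /jet mderivmZ mevalZ mulrCA. Qed.

Lemma jet0 pt a : jet (0 : {mpoly A[D]}) pt a = 0.
Proof. by rewrite -(scale0r 0) jetZ mul0r. Qed.

Lemma jet_sum (I : Type) (r : seq I) (P : pred I) (f : I -> {mpoly A[D]}) pt a :
  jet (\sum_(i <- r | P i) f i) pt a = \sum_(i <- r | P i) jet (f i) pt a.
Proof. by apply: (big_morph (fun p => jet p pt a)) => [p s|]; rewrite ?jetD ?jet0. Qed.

End JetLinear.

Section JetMonomial.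
Variables (F : numFieldType) (D : nat).

(* The [k]-th Taylor coefficient of [x ^ a] at [c]. *)
Definition jet1X (a k : nat) (c : F) : F := 'C(a, k)%:R * c ^+ (a - k).

Lemma jet1X_Leibniz (a b k : nat) (c : F) :
  \sum_(j < k.+1) jet1X a j c * jet1X b (k - j) c = jet1X (a + b) k c.
Proof.
rewrite /jet1X -binomial.Vandermonde natr_sum mulr_suml; apply: eq_bigr => j _.
have jk : (j <= k)%N by rewrite -ltnS.
have [aj|ja] := ltnP a j; first by rewrite bin_small // !(mul0r, mul0n).
have [bk|kb] := ltnP b (k - j); first by rewrite (bin_small bk) !(mul0r, mulr0, muln0).
rewrite natrM mulrACA -exprD; congr (_ * _ ^+ _); lia.
Qed.

Lemma jet_mpolyX (a g : 'X_{1..D}) (pt : 'I_D -> F) :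
  jet 'X_[a] pt g = \prod_(i < D) jet1X (a i) (g i) (pt i).
Proof.
rewrite /jet mderivmX mevalZ mevalX /mfact.
have -> : (\prod_(i < D) a i ^_ g i
           = (\prod_(i < D) 'C(a i, g i)) * \prod_(i < D) (g i)`!)%N.
  by rewrite -big_split /=; apply: eq_bigr => i _; rewrite bin_ffact.
rewrite natrM -mulrA mulrCA mulKf; last first.
  by rewrite pnatr_eq0 -lt0n prodn_gt0 // => i; exact: fact_gt0.
by rewrite natr_prod -big_split /=; apply: eq_bigr => i _; rewrite mnmBE.
Qed.

Lemma perm_lem_family (al : 'X_{1..D}) (L : seq 'X_{1..D}) :
  uniq L -> (forall g, (g \in L) = (g <= al)%MM) ->
  perm_eq L [seq [multinom (f i : nat) | i < D]
            | f : {ffun 'I_D -> 'I_(mdeg al).+1}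
              <- enum (family (fun i => [pred j : 'I_(mdeg al).+1 | (j <= al i)%N]))].
Proof.
move=> uL memL; apply: uniq_perm => //.
  rewrite map_inj_uniq ?enum_uniq // => f g /mnmP E; apply/ffunP=> i.
  by apply/val_inj; have := E i; rewrite !mnmE.
move=> g; rewrite memL; apply/idP/mapP => [le|[f]]; last first.
  by rewrite mem_enum => /familyP fle ->; apply/mnm_lepP => i; rewrite mnmE; exact: fle.
have g_small i : (g i < (mdeg al).+1)%N.
  by rewrite ltnS (leq_trans (mnm_lepP le i)) ?mnm_le_mdeg.
exists [ffun i => inord (g i)].
  by rewrite mem_enum; apply/familyP => i; rewrite inE ffunE inordK ?(mnm_lepP le).
by apply/mnmP => i; rewrite mnmE ffunE inordK.
Qed.

Lemma jet_mpolyX_Leibniz (a b al : 'X_{1..D}) (pt : 'I_D -> F) (L : seq 'X_{1..D}) :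
  uniq L -> (forall g, (g \in L) = (g <= al)%MM) ->
  jet 'X_[(a + b)%MM] pt al = \sum_(g <- L) jet 'X_[a] pt g * jet 'X_[b] pt (al - g)%MM.
Proof.
move=> uL memL; rewrite [LHS]jet_mpolyX.
transitivity (\prod_(i < D) \sum_(j : 'I_(mdeg al).+1 | (j <= al i)%N)
                 jet1X (a i) j (pt i) * jet1X (b i) (al i - j) (pt i)).
  apply: eq_bigr => i _; rewrite mnmDE -jet1X_Leibniz.
  rewrite (big_ord_widen (mdeg al).+1
    (fun j => jet1X (a i) j (pt i) * jet1X (b i) (al i - j) (pt i))) /=.
    by apply: eq_bigl => j; rewrite ltnS.
  by rewrite ltnS mnm_le_mdeg.
rewrite bigA_distr_big_dep (perm_big _ (perm_lem_family uL memL)) big_map big_enum /=.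
by apply: eq_bigr => f _; rewrite !jet_mpolyX -big_split; apply: eq_bigr => i _;
  rewrite mnmBE !mnmE.
Qed.

End JetMonomial.

Section JetPairing.
Variables (F : numFieldType) (D : nat).

Lemma perm_jetidx_shift (be g : 'X_{1..D}) :
  perm_eq [seq al <- jetidx be | (g <= al)%MM]
          [seq (g + d)%MM | d <- [seq d <- jetidx be | mpreceq (g + d)%MM be]].
Proof.
apply: uniq_perm; first exact/filter_uniq/uniq_jetidx.
  rewrite map_inj_uniq ?(filter_uniq _ (uniq_jetidx _)) // => d d' /eqP.
  by rewrite eqm_add2l => /eqP.
move=> al; rewrite mem_filter; apply/andP/mapP => [[le alJ]|[d]].
  exists (al - g)%MM; last by rewrite addmC submK.
  rewrite mem_filter addmC submK // -mem_jetidx alJ mem_jetidx.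
  by apply: lem_mpreceq (lem_subr _ _) _; rewrite -mem_jetidx.
by rewrite mem_filter => /andP [le _] ->; rewrite lem_addr mem_jetidx.
Qed.

(* The coefficient matrix on the right is the block [ximat] of [Xi]. *)
Lemma sum_xi_jet_mpolyXD (pt : 'I_D -> F) (be : 'X_{1..D}) (xk : 'X_{1..D} -> F)
    (a b : 'X_{1..D}) :
  \sum_(al <- jetidx be) xk al * jet 'X_[(a + b)%MM] pt al =
  \sum_(g <- jetidx be) \sum_(d <- jetidx be)
     jet 'X_[a] pt g * ((if mpreceq (g + d)%MM be then xk (g + d)%MM else 0)
                        * jet 'X_[b] pt d).
Proof.
set J := jetidx be.
transitivity (\sum_(al <- J) \sum_(g <- J)
   if (g <= al)%MM then xk al * (jet 'X_[a] pt g * jet 'X_[b] pt (al - g)%MM) else 0).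
  rewrite big_seq [RHS]big_seq; apply: eq_bigr => al alJ.
  rewrite (@jet_mpolyX_Leibniz _ _ a b al pt [seq g <- J | (g <= al)%MM]).
  - by rewrite mulr_sumr big_filter big_mkcond.
  - exact/filter_uniq/uniq_jetidx.
  move=> g; rewrite mem_filter andbC; case le: (g <= al)%MM; rewrite ?andbF //=.
  by rewrite mem_jetidx (lem_mpreceq le) // -mem_jetidx.
rewrite exchange_big /=; apply: eq_bigr => g _.
rewrite -big_mkcond -big_filter (perm_big _ (perm_jetidx_shift be g)) big_map big_filter.
rewrite [LHS]big_mkcond; apply: eq_bigr => d _.
by case: ifP => _; rewrite ?mul0r ?mulr0 // mulrCA addmC addmK.
Qed.

End JetPairing.

Definition chicol (F : fieldType) (D n : nat) : 'cV[{mpoly F[D]}]_(Nb D n + rb D n) :=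
  \col_j 'X_[tmon j].

Section MomentMatrix.
Variables (F : numFieldType) (D q : nat).
Variables (pts : 'I_q -> 'I_D -> F) (beta : 'I_q -> 'X_{1..D})
          (xi : 'I_q -> 'X_{1..D} -> F).

Lemma delta_der_jet pt (a : 'X_{1..D}) (c : F) p :
  (-1) ^+ mdeg a / (mfact a)%:R * c * delta_der pt a p = c * jet p pt a.
Proof.
rewrite /delta_der /jet; set s := (-1) ^+ mdeg a; set f := (mfact a)%:R.
have ss : s * s = 1 by rewrite -exprMn mulrNN mulr1 expr1n.
by rewrite -[RHS]mul1r -ss; ring.
Qed.

Lemma Gtr_uhat (u : {mpoly F[D]} -> F) n :
  let Jchi := jetS (chicol F D n) pts beta in
  Gtr (uhat pts beta xi u) n = Gtr u n + Jchi *m Xi beta xi *m Jchi^T.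
Proof.
move=> Jchi; apply/matrixP => i j.
rewrite /Jchi /jetS /Xi mul_mxrow_mxdiag tr_mxrow mul_mxrow_mxcol.
rewrite !mxE /uhat summxE; congr (_ + _); apply: eq_bigr => k _.
under eq_bigr do rewrite delta_der_jet.
rewrite sum_xi_jet_mpolyXD exchange_big /= (big_nth 0%MM) big_mkord.
rewrite !mxE; apply: eq_bigr => s _.
rewrite !mxE (big_nth 0%MM) big_mkord mulr_suml; apply: eq_bigr => r _.
by rewrite !mxE mulrA.
Qed.

End MomentMatrix.

Section JetMatrix.
Variables (F : numFieldType) (D q : nat).
Variables (pts : 'I_q -> 'I_D -> F) (beta : 'I_q -> 'X_{1..D}).

Lemma jetS_mxC_mul m m' (M : 'M[F]_(m', m)) (P : 'cV[{mpoly F[D]}]_m) :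
  jetS (mxC D M *m P) pts beta = M *m jetS P pts beta.
Proof.
rewrite /jetS mul_mxrow; apply: eq_mxrow => k; apply/matrixP => r c.
rewrite !mxE jet_sum; apply: eq_bigr => j _.
by rewrite !mxE mul_mpolyC jetZ.
Qed.

Lemma jetS_usubmx m1 m2 (P : 'cV[{mpoly F[D]}]_(m1 + m2)) :
  jetS (usubmx P) pts beta = usubmx (jetS P pts beta).
Proof. by apply/matrixP => r c; rewrite !mxE. Qed.

Lemma jetS_dsubmx m1 m2 (P : 'cV[{mpoly F[D]}]_(m1 + m2)) :
  jetS (dsubmx P) pts beta = dsubmx (jetS P pts beta).
Proof. by apply/matrixP => r c; rewrite !mxE. Qed.

Lemma jet_map_mpolyC (p : {mpoly F[D]}) (pt : 'I_D -> F) a :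
  jet (map_mpoly (fun c : F => c%:MP) p : {mpoly {mpoly F[D]}[D]})
      (fun k => (pt k)%:MP) a = (jet p pt a)%:MP.
Proof.
have mfact_unit : (mfact a)%:R \is a @GRing.unit F.
  by rewrite unitfE pnatr_eq0 -lt0n prodn_gt0 // => i; rewrite fact_gt0.
have jet_mapX (m : 'X_{1..D}) :
    jet (map_mpoly (fun c : F => c%:MP) 'X_[m] : {mpoly {mpoly F[D]}[D]})
        (fun k => (pt k)%:MP) a = (jet 'X_[m] pt a)%:MP.
  rewrite map_mpolyX /jet !mderivmX !mevalZ !mevalX rmorphM rmorphV //=.
  rewrite !rmorph_nat rmorphM /= rmorph_nat.
  by congr (_ * (_ * _)); rewrite rmorph_prod; apply: eq_bigr => i _; rewrite rmorphXn.
rewrite [in LHS](mpolyE p) [in RHS](mpolyE p) raddf_sum /= !jet_sum rmorph_sum /=.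
apply: eq_bigr => m _.
by rewrite map_mpolyZ jetZ jet_mapX jetZ [RHS]mpolyCM.
Qed.

Lemma trmx_jetK n (S H : 'M[F]_(Nb D n + rb D n)) :
  (jetK pts beta S H)^T =
  mxC D ((jetS (Pupto S) pts beta)^T *m invmx (Hupto H)) *m Pupto S.
Proof.
apply/matrixP => c z; rewrite ord1 !mxE /CDkernel !jet_sum.
under eq_bigr do rewrite jet_sum.
rewrite exchange_big /=; apply: eq_bigr => b _.
rewrite !mxE rmorph_sum /= mulr_suml; apply: eq_bigr => a _.
rewrite mulrC [_%:MP * map_mpoly _ _]mul_mpolyC jetZ jet_map_mpolyC.
by rewrite !mxE !rmorphM /= mulrC mulrA.
Qed.

End JetMatrix.

Section BlockAlgebra.
Variable F : fieldType.

Lemma unitmx_congr n (S M : 'M[F]_n) : S \in unitmx ->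
  (S *m M *m S^T \in unitmx) = (M \in unitmx).
Proof. by move=> SU; rewrite !unitmx_mul unitmx_tr SU andbT. Qed.

Lemma congr_invmx_sandwich n (S G H : 'M[F]_n) : S \in unitmx ->
  G = invmx S *m H *m (invmx S)^T -> H = S *m G *m S^T.
Proof.
move=> SU ->; rewrite !mulmxA mulmxV // mul1mx -mulmxA -trmx_mul.
by rewrite mulmxV // trmx1 mulmx1.
Qed.

Lemma unitmx_lblock_ul n1 n2 (A : 'M[F]_n1) (B : 'M[F]_(n2, n1)) (C : 'M[F]_n2) :
  block_mx A 0 B C \in unitmx -> A \in unitmx.
Proof. by rewrite !unitmxE det_lblock unitrM => /andP []. Qed.

Lemma lower_unitri_unit n1 n2 (T1 : 'M[F]_n1) (T21 : 'M[F]_(n2, n1)) :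
  (block_mx T1 0 T21 1%:M \in unitmx) = (T1 \in unitmx).
Proof. by rewrite !unitmxE det_lblock det1 mulr1. Qed.

Lemma lower_unitri_block_quotient n1 n2 (S1 Sh1 : 'M[F]_n1)
    (S21 Sh21 : 'M[F]_(n2, n1)) :
  S1 \in unitmx ->
  block_mx Sh1 0 Sh21 1%:M =
  block_mx (Sh1 *m invmx S1) 0 ((Sh21 - S21) *m invmx S1) 1%:M
    *m block_mx S1 0 S21 1%:M.
Proof.
move=> S1U; rewrite mulmx_block !mulmx0 !mul0mx !addr0 !mulmx1 mul1mx.
by rewrite !(mulmxKV S1U) subrK add0r.
Qed.

Lemma block_congr_diag n1 n2 (L1 M11 K1 : 'M[F]_n1) (L21 M21 : 'M[F]_(n2, n1))
    (M12 : 'M[F]_(n1, n2)) (M22 K2 : 'M[F]_n2) :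
  L1 \in unitmx ->
  block_mx K1 0 0 K2 =
    block_mx L1 0 L21 1%:M *m block_mx M11 M12 M21 M22 *m (block_mx L1 0 L21 1%:M)^T ->
  [/\ K1 = L1 *m M11 *m L1^T, L21 *m M11 = - M21 & K2 = M22 + L21 *m M12].
Proof.
move=> L1U; rewrite tr_block_mx !trmx0 trmx1 !mulmx_block.
rewrite !mul0mx !mulmx0 !mul1mx !mulmx1 !addr0.
case/eq_block_mx => -> _ E21 ->.
have L1tU : L1^T \in unitmx by rewrite unitmx_tr.
have /eqP : L21 *m M11 + M21 = 0 by rewrite -(mulmxK L1tU (_ + _)) -E21 mul0mx.
by rewrite addr_eq0 => /eqP ->; rewrite addNr mul0mx add0r addrC.
Qed.

End BlockAlgebra.

Section PushThrough.
Variables (F : fieldType) (k m : nat).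
Variables (X : 'M[F]_m) (J1 : 'M[F]_(k, m)) (H1 : 'M[F]_k).
Hypothesis H1U : H1 \in unitmx.

Definition pert_mx : 'M[F]_m := 1%:M + X *m (J1^T *m invmx H1 *m J1).
Local Notation A := pert_mx.
Local Notation M11 := (H1 + J1 *m X *m J1^T).

Lemma pert_push : A *m X *m J1^T = X *m J1^T *m invmx H1 *m M11.
Proof.
rewrite /pert_mx !mulmxDl mulmxDr !mul1mx !mulmxA.
by rewrite -(mulmxA _ (invmx H1) H1) mulVmx // mulmx1.
Qed.

Lemma unitmx_pert : M11 \in unitmx -> A \in unitmx.
Proof.
move=> M11U.
suff /mulmx1_unit[] : A *m (1%:M - X *m J1^T *m invmx M11 *m J1) = 1%:M by [].
rewrite mulmxBr mulmx1 !mulmxA pert_push -(mulmxA _ M11) mulmxV // mulmx1.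
by rewrite /pert_mx !mulmxA addrK.
Qed.

Lemma invmx_pert_push : M11 \in unitmx ->
  invmx A *m X *m J1^T *m invmx H1 = X *m J1^T *m invmx M11.
Proof.
move=> M11U; have AU := unitmx_pert M11U.
apply: (canRL (mulmxK M11U)); rewrite -!mulmxA; apply: (canLR (mulKmx AU)).
by rewrite !mulmxA pert_push.
Qed.

Lemma invmx_pert_split : A \in unitmx ->
  X = invmx A *m X + invmx A *m X *m J1^T *m invmx H1 *m J1 *m X.
Proof.
move=> AU; rewrite -!mulmxA -mulmxDr; apply: (canRL (mulKmx AU)).
by rewrite /pert_mx mulmxDl mul1mx !mulmxA.
Qed.

End PushThrough.

Section LUPerturbation.
Variables (F : fieldType) (N1 N2 m : nat).
Variables (S Sh H Hh : 'M[F]_(N1 + N2)) (Jc : 'M[F]_(N1 + N2, m)) (X : 'M[F]_m).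
Variables (S1 Sh1 H1 Hh1 : 'M[F]_N1) (S21 Sh21 : 'M[F]_(N2, N1)) (H2 Hh2 : 'M[F]_N2).
Hypotheses (ES : S = block_mx S1 0 S21 1%:M) (ESh : Sh = block_mx Sh1 0 Sh21 1%:M).
Hypotheses (EH : H = block_mx H1 0 0 H2) (EHh : Hh = block_mx Hh1 0 0 Hh2).
Hypotheses (SU : S \in unitmx) (ShU : Sh \in unitmx).
Hypotheses (HU : H \in unitmx) (HhU : Hh \in unitmx).
Variables (G Gh : 'M[F]_(N1 + N2)).
Hypothesis EG : G = invmx S *m H *m (invmx S)^T.
Hypothesis EGh : Gh = invmx Sh *m Hh *m (invmx Sh)^T.
Hypothesis moment_pert : Gh = G + Jc *m X *m Jc^T.

Let S1U : S1 \in unitmx. Proof. by rewrite -(lower_unitri_unit _ S21) -ES. Qed.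
Let Sh1U : Sh1 \in unitmx. Proof. by rewrite -(lower_unitri_unit _ Sh21) -ESh. Qed.
Let H1U : H1 \in unitmx. Proof. by move: HU; rewrite EH => /unitmx_lblock_ul. Qed.
Let Hh1U : Hh1 \in unitmx. Proof. by move: HhU; rewrite EHh => /unitmx_lblock_ul. Qed.

Local Notation J1 := (usubmx (S *m Jc)).
Local Notation J2 := (dsubmx (S *m Jc)).
Local Notation L1 := (Sh1 *m invmx S1).
Local Notation L21 := ((Sh21 - S21) *m invmx S1).
Local Notation L := (block_mx L1 0 L21 1%:M).

Lemma moment_pert_congr :
  Hh = L *m block_mx (H1 + J1 *m X *m J1^T) (J1 *m X *m J2^T)
                     (J2 *m X *m J1^T) (H2 + J2 *m X *m J2^T) *m L^T.
Proof.
rewrite (congr_invmx_sandwich ShU EGh) moment_pert ESh.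
rewrite (@lower_unitri_block_quotient _ _ _ S1 Sh1 S21 Sh21 S1U) -ES trmx_mul.
rewrite -!mulmxA; congr (_ *m _); rewrite !mulmxA; congr (_ *m _).
rewrite mulmxDr mulmxDl -(congr_invmx_sandwich SU EG) EH !mulmxA.
rewrite -(mulmxA _ _ S^T) -trmx_mul -[S *m Jc]vsubmxK.
rewrite tr_col_mx mul_col_mx mul_col_row add_block_mx.
by rewrite col_mxKu col_mxKd !add0r.
Qed.

Lemma lu_perturbation :
  let A := pert_mx X J1 H1 in
  [/\ A \in unitmx, L21 = - (J2 *m invmx A *m X *m J1^T *m invmx H1)
    & Hh2 = H2 + J2 *m invmx A *m X *m J2^T].
Proof.
move=> A; have L1U : L1 \in unitmx by rewrite unitmx_mul Sh1U unitmx_inv.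
have [E11 L21M11 ->] := block_congr_diag L1U (etrans (esym EHh) moment_pert_congr).
have M11U : H1 + J1 *m X *m J1^T \in unitmx by rewrite -(unitmx_congr _ L1U) -E11 Hh1U.
have AU : A \in unitmx by exact: unitmx_pert.
have EL21 : L21 = - (J2 *m invmx A *m X *m J1^T *m invmx H1).
  rewrite -[L21](mulmxK M11U) L21M11 -!mulmxA (mulmxA (invmx A)) (mulmxA _ J1^T).
  by rewrite (invmx_pert_push H1U M11U) !mulmxA mulNmx.
split => //; rewrite EL21 {1}(invmx_pert_split AU) mulmxDr mulmxDl !mulmxA mulNmx.
by rewrite !mulNmx -addrA addrK.
Qed.

End LUPerturbation.

Lemma mxC_invmx (F : fieldType) D n (A : 'M[F]_n) : invmx (mxC D A) = mxC D (invmx A).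
Proof. by rewrite /mxC map_invmx. Qed.

Section TruncatedBlocks.
Variables (F : fieldType) (D n : nat).
Local Notation N1 := (Nb D n).
Local Notation N2 := (rb D n).

Lemma block_lower_unitriE (S : 'M[F]_(N1 + N2)) : block_lower_unitri S ->
  S = block_mx (ulsubmx S) 0 (dlsubmx S) 1%:M.
Proof.
move=> BS; rewrite -[S in LHS]submxK; congr block_mx; apply/matrixP => i j; rewrite !mxE.
  apply: (BS _ _).1; rewrite (@tdeg_eq _ _ (rshift N1 j)) /= ?leq_addr //.
  by apply: tdeg_lt => /=.
rewrite (BS _ _).2; first by rewrite (inj_eq (@rshift_inj _ _)).
by rewrite !tdeg_eq //= leq_addr.
Qed.

Lemma block_diagonalE (H : 'M[F]_(N1 + N2)) : block_diagonal H ->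
  H = block_mx (ulsubmx H) 0 0 (drsubmx H).
Proof.
have ne_n (i : 'I_N1) : tdeg (lshift N2 i) != n.
  by rewrite neq_ltn tdeg_lt //= ltn_ord.
move=> BH; rewrite -[H in LHS]submxK; congr block_mx; apply/matrixP => i j.
  by rewrite !mxE BH // (@tdeg_eq _ _ (rshift N1 j)) /= ?leq_addr.
by rewrite !mxE BH // (@tdeg_eq _ _ (rshift N1 i)) /= ?leq_addr // eq_sym.
Qed.

Lemma LU_factorization_unit (u : {mpoly F[D]} -> F) (S H : 'M[F]_(N1 + N2)) :
  Gtr u n \in unitmx -> Gtr u n = invmx S *m H *m (invmx S)^T ->
  S \in unitmx /\ H \in unitmx.
Proof.
move=> + EG; rewrite EG !unitmx_mul unitmx_tr unitmx_inv.
by case/andP => /andP [-> ->].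
Qed.

Lemma Pvec_mxC (S : 'M[F]_(N1 + N2)) : Pvec S = mxC D S *m chicol F D n.
Proof. by apply/matrixP => i j; rewrite !mxE; apply: eq_bigr => k _; rewrite !mxE. Qed.

Lemma Pvec_lower_unitri (S1 : 'M[F]_N1) (S21 : 'M[F]_(N2, N1)) :
  let S := block_mx S1 0 S21 1%:M in
  Pupto S = mxC D S1 *m usubmx (chicol F D n) /\
  Pblk S = mxC D S21 *m usubmx (chicol F D n) + dsubmx (chicol F D n).
Proof.
rewrite /Pupto /Pblk Pvec_mxC -{1 3}[chicol F D n]vsubmxK.
rewrite /mxC map_block_mx mul_block_col col_mxKu col_mxKd map_mx0 map_mx1.
by rewrite mul0mx addr0 mul1mx.
Qed.

Lemma Pblk_lower_unitri_quotient (S1 Sh1 : 'M[F]_N1) (S21 Sh21 : 'M[F]_(N2, N1)) :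
  S1 \in unitmx ->
  Pblk (block_mx Sh1 0 Sh21 1%:M) =
  Pblk (block_mx S1 0 S21 1%:M)
    + mxC D ((Sh21 - S21) *m invmx S1) *m Pupto (block_mx S1 0 S21 1%:M).
Proof.
move=> S1U; have [-> ->] := Pvec_lower_unitri S1 S21.
have [_ ->] := Pvec_lower_unitri Sh1 Sh21.
rewrite mulmxA -/(mxC D _) -map_mxM /= (mulmxKV S1U) /mxC map_mxB mulmxBl.
by rewrite addrAC addrCA subrr addr0.
Qed.

End TruncatedBlocks.

Unset Implicit Arguments.

Theorem mainTheorem15 (R : rcfType) (D q : nat)
    (u : {mpoly R[i][D]} -> R[i])
    (x : 'I_q -> 'rV[R]_D) (beta : 'I_q -> 'X_{1..D})
    (xi : 'I_q -> 'X_{1..D} -> R[i]) :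
  let pts : 'I_q -> 'I_D -> R[i] := fun i k => ((x i 0 k)%:C)%C in
  let uh := uhat pts beta xi u in
  lin_functional u ->
  injective x ->
  quasi_definite u ->
  quasi_definite uh ->
  forall n : nat, (1 <= n)%N ->
  forall S H Sh Hh : 'M[R[i]]_(Nb D n + rb D n),
  LU_factorization u S H ->
  LU_factorization uh Sh Hh ->
  let A := 1%:M + Xi beta xi *m calK pts beta S H in
  let JPn := jetS (Pblk S) pts beta in
  [/\ A \in unitmx,
      Pblk Sh = qdet (mxC D A) (mxC D (Xi beta xi) *m (jetK pts beta S H)^T)
                     (mxC D JPn) (Pblk S)
    & Hblk Hh = qdet A (- (Xi beta xi *m JPn^T)) JPn (Hblk H)].
Proof.
move=> pts uh _ _ qdu qduh n _ S H Sh Hh [BS BH EG] [BSh BHh EGh] A JPn.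
have [SU HU] := LU_factorization_unit (qdu n) EG.
have [ShU HhU] := LU_factorization_unit (qduh n) EGh.
have ES := block_lower_unitriE BS; have ESh := block_lower_unitriE BSh.
have EH := block_diagonalE BH; have EHh := block_diagonalE BHh.
have S1U : ulsubmx S \in unitmx by rewrite -(lower_unitri_unit _ (dlsubmx S)) -ES.
have [] := lu_perturbation ES ESh EH EHh SU ShU HU HhU EG EGh (Gtr_uhat pts beta xi u n).
have JP : jetS (Pvec S) pts beta = S *m jetS (chicol _ D n) pts beta.
  by rewrite Pvec_mxC jetS_mxC_mul.
rewrite -JP -jetS_usubmx -jetS_dsubmx -/(Pupto S) -/(Pblk S) -/JPn -/(Hupto H).
have -> : pert_mx (Xi beta xi) (jetS (Pupto S) pts beta) (Hupto H) = A by [].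
move=> AU EL EH2; split => //.
  rewrite ESh (Pblk_lower_unitri_quotient _ (dlsubmx S) _ S1U) -ES EL.
  by rewrite /qdet trmx_jetK mxC_invmx /mxC map_mxN !map_mxM mulNmx !mulmxA.
by rewrite /qdet /Hblk EH2 mulmxN opprK mulmxA.
Qed.
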